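(* Let $S=\mathbb{R}_{\max,+}$, let $A=(a_{ij})\in M_{m\times n}(S)$ have every column with at least one entry different from $-\infty$, let $b\in S^m$ be regular, and suppose the system $AX=b$ has a solution. Let $Q$ be the associated normalized matrix of the system, and let $k$ be the number of distinct column indices $j$ such that some row of $Q$ contains exactly one column minimum element and that element lies in column $j$. Let $A_{j_1},\dots,A_{j_p}$ be any linearly independent set of columns of $A$ such that $b$ is a linear combination of them, and let $\mathcal{D}_f=n-p$ be the corresponding number of free variables (degrees of freedom). Then: (1) if $k=0$, then $\mathcal{D}_f\le n-1$; (2) if $k\neq0$, then $\mathcal{D}_f\le n-k$.
   Context: $\mathbb{R}_{\max,+}=(\mathbb{R}\cup\{-\infty\},\max,+,-\infty,0)$; $(AX)_i=\max_j(a_{ij}+x_j)$. A vector is regular if no entry is $-\infty$. A linear combination of vectors $v_1,\dots,v_p\in S^m$ is $\max_l(v_l+s_l)$ with $s_l\in S$ (entrywise). A set $\mathcal{A}$ of vectors is linearly independent if no $v\in\mathcal{A}$ is a linear combination of the elements of $\mathcal{A}\setminus\{v\}$. If $A_{j_1},\dots,A_{j_p}$ are linearly independent columns of which $b$ is a linear combination, $x_{j_1},\dots,x_{j_p}$ are called leading variables, the others free variables, and $\mathcal{D}_f$ is the number of free variables. Normalization: $\hat A_j$ is the arithmetic mean of the entries of column $A_j$ that are not $-\infty$; $\tilde a_{ij}=a_{ij}-\hat A_j$; $\hat b=\frac{1}{m}\sum_i b_i$, $\tilde b_i=b_i-\hat b$. The associated normalized matrix $Q=(q_{ij})$ has $q_{ij}=\tilde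 b_i-\tilde a_{ij}$ if $a_{ij}\neq-\infty$ and $q_{ij}=(-\infty)^-$ (a symbol larger than every real number) if $a_{ij}=-\infty$. An entry $q_{ij}$ is a column minimum element if $q_{ij}=\min_l q_{lj}$. *)

From Stdlib Require Import Reals.
From mathcomp Require Import all_boot all_order all_algebra.
From mathcomp Require Import Rstruct.
Set Implicit Arguments. Unset Strict Implicit. Unset Printing Implicit Defensive.
Import Order.TTheory GRing.Theory Num.Theory.
Local Open Scope ring_scope.

(* The max-plus semiring R_{max,+}: None stands for -oo. *)
Definition S := option R.

Definition sadd (x y : S) : S :=
  match x, y with Some a, Some b => Some (a + b) | _, _ => None end.
Definition smax (x y : S) : S :=
  match x, y with
  | Some a, Some b => Some (Num.max a b)
  | None, _ => y
  | _, None => x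
  end.

Definition mpmul (m n : nat) (A : 'I_m -> 'I_n -> S) (x : 'I_n -> S) (i : 'I_m) : S :=
  \big[smax/None]_(j < n) sadd (A i j) (x j).

Definition solvable (m n : nat) (A : 'I_m -> 'I_n -> S) (b : 'I_m -> S) : Prop :=
  exists x : 'I_n -> S, forall i, mpmul A x i = b i.

Definition is_lincomb (m n : nat) (A : 'I_m -> 'I_n -> S) (J : {set 'I_n})
  (v : 'I_m -> S) : Prop :=
  exists s : 'I_n -> S, forall i, v i = \big[smax/None]_(j in J) sadd (A i j) (s j).

Definition lin_indep (m n : nat) (A : 'I_m -> 'I_n -> S) (J : {set 'I_n}) : Prop :=
  forall j, j \in J -> ~ is_lincomb A (J :\ j) (fun i => A i j).

Definition colhat (m n : nat) (A : 'I_m -> 'I_n -> S) (j : 'I_n) : R :=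
  (\sum_(i | A i j != None) odflt 0 (A i j)) / (#|[set i | A i j != None]|)%:R.
Definition bhat (m : nat) (b : 'I_m -> S) : R :=
  (\sum_(i < m) odflt 0 (b i)) / m%:R.
Definition btilde (m : nat) (b : 'I_m -> S) (i : 'I_m) : R := odflt 0 (b i) - bhat b.
Definition atilde (m n : nat) (A : 'I_m -> 'I_n -> S) (i : 'I_m) (j : 'I_n) (a : R) : R :=
  a - colhat A j.

(* Entries of the normalized matrix: Some q is a real number,
   None is the symbol (-oo)^- which is larger than every real number. *)
Definition Qmat (m n : nat) (A : 'I_m -> 'I_n -> S) (b : 'I_m -> S)
  (i : 'I_m) (j : 'I_n) : option R :=
  match A i j with
  | Some a => Some (btilde b i - atilde A i j a)
  | None => None
  end.

Definition Qle (x y : option R) : bool :=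
  match x, y with
  | Some a, Some c => a <= c
  | _, None => true
  | None, Some _ => false
  end.

Definition colmin (m n : nat) (A : 'I_m -> 'I_n -> S) (b : 'I_m -> S)
  (i : 'I_m) (j : 'I_n) : bool :=
  [forall l, Qle (Qmat A b i j) (Qmat A b l j)].

Definition kset (m n : nat) (A : 'I_m -> 'I_n -> S) (b : 'I_m -> S) : {set 'I_n} :=
  [set j | [exists i, colmin A b i j && [forall j', colmin A b i j' ==> (j' == j)]]].

Definition kcount (m n : nat) (A : 'I_m -> 'I_n -> S) (b : 'I_m -> S) : nat :=
  #|kset A b|.

From Stdlib Require Import Reals.
From HB Require Import structures.
From mathcomp Require Import all_boot all_order all_algebra.
From mathcomp Require Import Rstruct.
From mathcomp Require Import lra zify.
Set Implicit Arguments. Unset Strict Implicit. Unset Printing Implicit Defensive.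
Import Order.TTheory GRing.Theory Num.Theory.
Local Open Scope ring_scope.

(* In each row i the maximum b_i = max_(l in J) (a_il + s_l) is attained at
   some l in J.  Then s_l = b_i - a_il <= b_r - a_rl for every row r, and since
   normalisation shifts each column of Q by a constant, q_il is a column
   minimum.  So every row of Q has a column minimum in a column of J: a row
   whose only column minimum lies in column j forces j in J, whence k <= |J|,
   and J is nonempty as soon as A has a row. *)

Lemma smaxA : associative smax.
Proof. by case=> [x|] [y|] [z|] //=; rewrite maxA. Qed.

Lemma smaxC : commutative smax.
Proof. by case=> [x|] [y|] //=; rewrite maxC. Qed.

Lemma smax0s : left_id None smax.
Proof. by case. Qed.

HB.instance Definition _ := Monoid.isComLaw.Build S None smax smaxA smaxC smax0s.

Lemma smax_left_or_right (x y : S) : smax x y = x \/ smax x y = y.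
Proof. by case: x => [a|]; case: y => [c|] /=; auto; rewrite /Num.max; case: ifP; auto. Qed.

Lemma le_smaxl (x y : S) (v w : R) : smax x y = Some v -> x = Some w -> w <= v.
Proof. by move=> /[swap] ->; case: y => [c|] /= [<-] //; rewrite le_max lexx. Qed.

Lemma bigsmax_attained (n : nat) (J : {set 'I_n}) (F : 'I_n -> S) (v : R) :
  \big[smax/None]_(j in J) F j = Some v -> exists2 l, l \in J & F l = Some v.
Proof.
pose P x := x = None \/ exists2 l, l \in J & F l = x.
have [->//|[l lJ <-]] : P (\big[smax/None]_(j in J) F j).
  apply: big_ind => [|x y Px Py|l lJ]; [by left | | by right; exists l].
  by case: (smax_left_or_right x y) => ->.
by move=> Fl; exists l.
Qed.

Lemma le_bigsmax (n : nat) (J : {set 'I_n}) (F : 'I_n -> S) (l : 'I_n) (v w : R) :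
  l \in J -> F l = Some w -> \big[smax/None]_(j in J) F j = Some v -> w <= v.
Proof. by move=> lJ Fl; rewrite (bigD1 l) //= => /le_smaxl; apply. Qed.

Section ColumnMinima.

Variables (m n : nat) (A : 'I_m -> 'I_n -> S) (b : 'I_m -> S).
Hypothesis hb : forall i, b i <> None.

(* [btilde] and [atilde] are written with Stdlib's [Rminus], hence [RminusE]. *)
Lemma Qmat_Some (i : 'I_m) (j : 'I_n) (a bi : R) :
  A i j = Some a -> b i = Some bi -> Qmat A b i j = Some (bi - a - bhat b + colhat A j).
Proof. by move=> Aij bi_eq; rewrite /Qmat Aij /btilde /atilde bi_eq /= !RminusE; congr Some; lra. Qed.

Lemma colmin_of_min_residual (i : 'I_m) (j : 'I_n) (a bi : R) :
  A i j = Some a -> b i = Some bi ->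
  (forall r a' br, A r j = Some a' -> b r = Some br -> bi - a <= br - a') ->
  colmin A b i j.
Proof.
move=> Aij bi_eq min_res; apply/forallP => r; rewrite (Qmat_Some Aij bi_eq).
case Arj: (A r j) => [a'|]; last by rewrite /Qmat Arj.
case br_eq: (b r) (@hb r) => [br|] // _.
have := min_res r a' br Arj br_eq.
rewrite (Qmat_Some Arj br_eq) /=; move: (bhat b) (colhat A j) => d e; lra.
Qed.

Lemma lincomb_colmin (J : {set 'I_n}) :
  is_lincomb A J b -> forall i, exists2 l, l \in J & colmin A b i l.
Proof.
move=> [s bE] i.
have row_max r br : b r = Some br -> \big[smax/None]_(j in J) sadd (A r j) (s j) = Some br.
  by rewrite -bE.
case bi_eq: (b i) (@hb i) => [bi|] // _.
have [l lJ] := bigsmax_attained (row_max i bi bi_eq).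
case Ail: (A i l) => [a|] //; case sl_eq: (s l) => [c|] //= [sum_bi].
exists l => //; apply: (colmin_of_min_residual Ail bi_eq) => r a' br Arl br_eq.
have : a' + c <= br by apply: (le_bigsmax lJ _ (row_max r br br_eq)); rewrite Arl sl_eq.
rewrite -sum_bi; lra.
Qed.

Lemma kset_sub_lincomb_support (J : {set 'I_n}) :
  is_lincomb A J b -> kset A b \subset J.
Proof.
move=> bJ; apply/subsetP => j; rewrite inE => /existsP [i /andP [_ /forallP uniq_min]].
have [l lJ il_min] := lincomb_colmin bJ i.
by move: (uniq_min l); rewrite il_min => /eqP <-.
Qed.

Lemma lincomb_support_gt0 (i : 'I_m) (J : {set 'I_n}) :
  is_lincomb A J b -> (0 < #|J|)%N.
Proof.
move=> bJ; have [l lJ _] := lincomb_colmin bJ i.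
by apply/card_gt0P; exists l.
Qed.

End ColumnMinima.

Theorem mainTheorem3 (m n : nat) (A : 'I_m -> 'I_n -> S) (b : 'I_m -> S)
  (hA : forall j : 'I_n, exists i : 'I_m, A i j <> None)
  (hb : forall i : 'I_m, b i <> None)
  (hsol : solvable A b)
  (J : {set 'I_n}) (hJ : lin_indep A J) (hbJ : is_lincomb A J b) :
  (kcount A b = 0%N -> (n - #|J| <= n - 1)%N) /\
  (kcount A b <> 0%N -> (n - #|J| <= n - kcount A b)%N).
Proof.
have k_le_J : (kcount A b <= #|J|)%N.
  exact/subset_leq_card/(kset_sub_lincomb_support hb hbJ).
split=> [_|_]; last by lia.
have [n0|n_gt0] := posnP n; first by lia.
have [i _] := hA (Ordinal n_gt0).
have := lincomb_support_gt0 hb i hbJ.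
lia.
Qed.
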